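(* Let $I$ be a binary, friendship-uniform instance with common friendship value $\phi=\phi_{\min}>1$ whose friendship graph $(N,F^* )$ has maximum degree $1$, and let $A$ be the (random) allocation output by FF-CT-RSD$^*$ on $I$ when all agents report their friendships truthfully and choose plots to maximize their utility. Then $\mathbb E(\mathrm{SW}(A))\ge\frac14\,\mathrm{OPT}(I)$.
   Context: Instance: agents $N$, $n=|N|$ plots $\mathcal V$, undirected plot graph $(\mathcal V,\mathcal E)$, valuations $u_i:\mathcal V\to\{0,1\}$ (binary), reciprocal friendship relation $F$ with $\phi_{i,j}=\phi$ for all $(i,j)\in F$ (friendship-uniform); $F^*=\{\{i,j\}:(i,j)\in F\}$. For an allocation (bijection) $A:N\to\mathcal V$, $U_i(A)=u_i(A(i))+\sum_{(i,j)\in F}\phi\,\mathbb I(\{A(i),A(j)\}\in\mathcal E)$, $\mathrm{SW}(A)=\sum_iU_i(A)$, $\mathrm{OPT}(I)=\max_A\mathrm{SW}(A)$. RSD$^*$: in each iteration, the remaining agents report whether they value some still-available plot positively; if some do, one of them is chosen uniformly at random and picks a plot; otherwise remaining agents are arbitrarily paired with remaining plots and the procedure stops. FF-CT-RSD$^*$: each agent reports a friend (or none); let $P$ be the set of pairs $\{i,j\}$ who report each other. While there exists a pair of adjacent unoccupied plots and $P\ne\emptyset$, a pair $\{i,j\}$ is removed from $P$ uniformly at random and $i$ and $j$ pick plots consecutively (in random order). Once $P=\emptyset$ or no two adjacent plots are unoccupied, RSD$^*$ is run on the remaining agents and plots. Expectation is over the mechanism's randomness. *)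

From HB Require Import structures.
From mathcomp Require Import all_boot all_order all_algebra.
Set Implicit Arguments. Unset Strict Implicit. Unset Printing Implicit Defensive.
Import Order.TTheory GRing.Theory Num.Theory.
Local Open Scope ring_scope.

Section Model.
Variables (R : realFieldType) (N V : finType).
Variable E : rel V.
Variable u : N -> V -> bool.
Variable F : rel N.
Variable phi : R.

Definition util (A : {ffun N -> V}) (i : N) : R :=
  (u i (A i))%:R + \sum_(j | F i j) phi * (E (A i) (A j))%:R.

Definition SW (A : {ffun N -> V}) : R := \sum_i util A i.

(* OPT(I) = max over bijections N -> V (injective, #|N| = #|V|) of SW;
   SW >= 0, so starting the max at 0 is harmless. *)
Definition OPT : R :=
  \big[Order.max/0]_(A : {ffun N -> V} | injectiveb A) SW A.

Definition palloc := {ffun N -> option V}.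
Definition free (pa : palloc) (v : V) : bool := [forall x, pa x != Some v].
Definition placed (pa : palloc) (i : N) (v : V) : palloc :=
  [ffun x => if x == i then Some v else pa x].
Definition adjfree (pa : palloc) : bool :=
  [exists v, exists w, [&& v != w, E v w, free pa v & free pa w]].
Definition pinj (pa : palloc) : Prop :=
  forall x y v, pa x = Some v -> pa y = Some v -> x = y.

(* the "arbitrary pairing" of remaining agents with remaining plots *)
Definition completion_ok (c : palloc -> {ffun N -> V}) : Prop :=
  forall pa, pinj pa -> injective (c pa) /\ (forall i v, pa i = Some v -> c pa i = v).

(* behaviour (choice) functions of the agents, indexed by the remaining
   step budget k (a function of the history):
   s1 k P pa a b : plot picked by a, first of the pair {a,b} (P = remaining pairs)
   s2 k P pa b   : plot picked by b, second of its pair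
   s3 k pa i     : plot picked by i in RSD* *)
Record strat := Strat {
  s1 : nat -> {set {set N}} -> palloc -> N -> N -> V;
  s2 : nat -> {set {set N}} -> palloc -> N -> V;
  s3 : nat -> palloc -> N -> V }.

Variable c : palloc -> {ffun N -> V}.
Variable st : strat.

Definition rsd_set (pa : palloc) : {set N} :=
  [set i | (pa i == None) && [exists v, free pa v && u i v]].

(* expectation of f over the outcome of RSD* started at pa (budget k) *)
Fixpoint run2 (k : nat) (pa : palloc) (f : {ffun N -> V} -> R) : R :=
  match k with
  | 0 => f (c pa)
  | k'.+1 =>
    let S := rsd_set pa in
    if S == set0 then f (c pa) else
    \sum_(i in S) (#|S|%:R)^-1 * run2 k' (placed pa i (s3 st k' pa i)) f
  end.

(* expectation of f over the outcome of the friend phase of FF-CT-RSD*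
   (remaining pairs P), followed by RSD* *)
Fixpoint run1 (k : nat) (P : {set {set N}}) (pa : palloc)
    (f : {ffun N -> V} -> R) : R :=
  match k with
  | 0 => f (c pa)
  | k'.+1 =>
    if (P != set0) && adjfree pa then
      \sum_(p in P) (#|P|%:R)^-1 *
        \sum_(ab : N * N | (ab.1 != ab.2) && (p == [set ab.1; ab.2]))
          2^-1 *
          (let P' := P :\ p in
           let pa1 := placed pa ab.1 (s1 st k' P' pa ab.1 ab.2) in
           let pa2 := placed pa1 ab.2 (s2 st k' P' pa1 ab.2) in
           run1 k' P' pa2 f)
    else run2 k pa f
  end.

(* utility maximisation (subgame-perfect, in expectation) of every choice *)
Definition rational : Prop :=
  (forall k P pa a b, (exists v, free pa v) ->
     free pa (s1 st k P pa a b) /\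
     forall w, free pa w ->
       let val x := (let pa1 := placed pa a x in
                     run1 k P (placed pa1 b (s2 st k P pa1 b)) (util^~ a)) in
       val w <= val (s1 st k P pa a b)) /\
  (forall k P pa b, (exists v, free pa v) ->
     free pa (s2 st k P pa b) /\
     forall w, free pa w ->
       run1 k P (placed pa b w) (util^~ b)
         <= run1 k P (placed pa b (s2 st k P pa b)) (util^~ b)) /\
  (forall k pa i, (exists v, free pa v) ->
     free pa (s3 st k pa i) /\
     forall w, free pa w ->
       run2 k (placed pa i w) (util^~ i)
         <= run2 k (placed pa i (s3 st k pa i)) (util^~ i)).

(* truthful friend reports: each agent reports its (unique) friend, if any *)
Definition report (i : N) : option N := [pick j | F i j].

Definition P0 : {set {set N}} :=
  [set p : {set N} | [exists i, exists j,
     [&& report i == Some j, report j == Some i & p == [set i; j]]]].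

Definition empty_alloc : palloc := [ffun => None].

Definition expected_SW : R := run1 #|N| P0 empty_alloc SW.

End Model.

(* Fix an optimal bijection A*. Call an unplaced agent valued if it values its plot under
   A* and that plot is still free, and call a friendship (i, j) adjacent if A* i and A* j
   are adjacent and both still free. By induction on the run, the expected welfare still
   to be collected by the unplaced agents is at least
     #valued / 4 + phi / 4 * min(#adjacent, #friendships whose pair is still to be drawn).
   In the friend phase each member of the drawn pair ends up with utility at least phi:
   whenever a free plot adjacent to his friend's exists the second picker takes one (it
   is worth phi > 1), so the first picker can secure phi by taking one end of a free
   adjacent pair of plots, and a payoff of phi forces the two plots to be adjacent. Two
   placements lower each count by at most 4, so the bound drops by at most 1 + phi <= 2 phi.
   The friend phase stops only when one of the two counts in the minimum is 0. In RSD*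
   the picker earns 1 while #valued drops by at most 2. Initially the bound is a quarter
   of the welfare of A*, since every friendship of A* is still to be drawn. *)

From Pilot Require Import Defs.
From HB Require Import structures.
From mathcomp Require Import all_boot all_order all_algebra.
From mathcomp Require Import zify lra.
Set Implicit Arguments. Unset Strict Implicit. Unset Printing Implicit Defensive.
Import Order.TTheory GRing.Theory Num.Theory.
Local Open Scope ring_scope.

(* all_algebra also exports a [free] (linear independence of vectors). *)
Local Notation free := Defs.free.

Lemma mean_const (R : numFieldType) (T : finType) (S : {set T}) (K : R) :
  S != set0 -> \sum_(i in S) #|S|%:R^-1 * K = K.
Proof.
move=> S0; rewrite sumr_const -mulrnAl -mulr_natr mulVf ?mul1r //.
by rewrite pnatr_eq0 -lt0n card_gt0.
Qed.

Lemma eq_set2 (T : finType) (a b i j : T) : a != b -> [set a; b] = [set i; j] ->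
  (a = i /\ b = j) \/ (a = j /\ b = i).
Proof.
move=> ab e.
have ha : a \in [set i; j] by rewrite -e set21.
have hb : b \in [set i; j] by rewrite -e set22.
move: ha hb; rewrite !inE => /orP[] /eqP ea /orP[] /eqP eb; subst;
  by [left | right | rewrite eqxx in ab].
Qed.

Lemma irr_rel_neq (T : eqType) (r : rel T) x y : irreflexive r -> r x y -> x != y.
Proof. by move=> irr; apply: contraTneq => ->; rewrite irr. Qed.

Lemma card_le_cover (T : finType) (A B C : {set T}) :
  A \subset B :|: C -> (#|A| <= #|B| + #|C|)%N.
Proof. by move=> /subset_leq_card /leq_trans; apply; rewrite cardsU leq_subr. Qed.

Lemma card_le_cover3 (T : finType) (A B C D : {set T}) :
  A \subset B :|: C :|: D -> (#|A| <= #|B| + #|C| + #|D|)%N.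
Proof.
move=> /card_le_cover /leq_trans; apply.
by rewrite leq_add2r; apply: card_le_cover.
Qed.

Lemma natr_card_set (R : pzSemiRingType) (T : finType) (Q : pred T) :
  (#|[set x | Q x]|%:R : R) = \sum_x (Q x)%:R.
Proof.
rewrite -sum1dep_card natr_sum big_mkcond.
by apply: eq_bigr => x _; case: (Q x).
Qed.

Section PartialAllocation.
Variables (N V : finType) (E : rel V).
Implicit Types (pa : palloc N V) (A : {ffun N -> V}).

Definition extends pa A := forall i v, pa i = Some v -> A i = v.

Definition unplaced pa := [set i | pa i == None].

Lemma free_neq pa v i : free pa v -> pa i <> Some v.
Proof. by move=> /forallP /(_ i) /eqP. Qed.

Lemma free_placed pa i x v : free pa v -> v != x -> free (placed pa i x) v.
Proof.
move=> fv vx; apply/forallP => t; rewrite ffunE.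
case: (t =P i) => _; last by apply/eqP; apply: free_neq fv.
by apply: contraNneq vx => -[->].
Qed.

Lemma pinj_placed pa i v : pinj pa -> free pa v -> pinj (placed pa i v).
Proof.
move=> inj fv x y w; rewrite !ffunE.
case: eqP => [->|_]; case: eqP => [->|_] //.
- by move=> [<-] /free_neq.
- by move=> + [vw]; rewrite -vw => /free_neq.
- exact: inj.
Qed.

Lemma extends_placed pa i v A :
  pa i = None -> extends (placed pa i v) A -> extends pa A.
Proof.
move=> pai ext j w paj; apply: ext; rewrite ffunE.
by case: eqP => // ji; rewrite ji pai in paj.
Qed.

Lemma extends_placed_at pa i v A : extends (placed pa i v) A -> A i = v.
Proof. by apply; rewrite ffunE eqxx. Qed.

Lemma card_unplaced_placed pa i v :
  pa i = None -> (#|unplaced (placed pa i v)| < #|unplaced pa|)%N.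
Proof.
move=> pai; apply: proper_card; apply/properP; split.
  by apply/subsetP => j; rewrite !inE ffunE; case: (j =P i).
by exists i; rewrite !inE ?ffunE ?pai ?eqxx.
Qed.

Lemma free_empty v : free (empty_alloc N V) v.
Proof. by apply/forallP => i; rewrite ffunE. Qed.

Lemma adjfreeP pa :
  adjfree E pa -> exists v w, [/\ v != w, E v w, free pa v & free pa w].
Proof. by move=> /existsP [v /existsP [w /and4P [*]]]; exists v, w. Qed.

Lemma adjfree_ex_free pa : adjfree E pa -> exists v, free pa v.
Proof. by move=> /adjfreeP [v [w [_ _ fv _]]]; exists v. Qed.

Lemma adjfree_ex_free_placed pa a z :
  adjfree E pa -> exists v, free (placed pa a z) v.
Proof.
move=> /adjfreeP [v [w [vw _ fv fw]]].
have [vz|vz] := eqVneq v z; last by exists v; apply: free_placed.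
by exists w; apply: free_placed fw _; rewrite -vz eq_sym.
Qed.

End PartialAllocation.

Section Expectation.
Variables (R : realFieldType) (N V : finType) (E : rel V) (u : N -> V -> bool).
Variables (c : palloc N V -> {ffun N -> V}) (st : strat N V).
Local Notation run1 := (@run1 R N V E u c st).
Local Notation run2 := (@run2 R N V u c st).

Lemma eq_run2 k pa f g : f =1 g -> run2 k pa f = run2 k pa g.
Proof.
move=> fg; elim: k pa => [|k IH] pa /=; first exact: fg.
by case: ifP => _; [exact: fg | apply: eq_bigr => i _; rewrite IH].
Qed.

Lemma run2D k pa f g : run2 k pa (fun A => f A + g A) = run2 k pa f + run2 k pa g.
Proof.
elim: k pa => [|k IH] pa //=; case: ifP => // _.
by rewrite -big_split; apply: eq_bigr => i _; rewrite IH mulrDr.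
Qed.

Lemma run2_const k pa K : run2 k pa (fun=> K) = K.
Proof.
elim: k pa => [|k IH] pa //=; case: ifP => // /negbT S0.
by under eq_bigr do rewrite IH; rewrite mean_const.
Qed.

Lemma eq_run1 k P pa f g : f =1 g -> run1 k P pa f = run1 k P pa g.
Proof.
move=> fg; elim: k P pa => [|k IH] P pa /=; first exact: fg.
case: ifP => _; last exact: (eq_run2 k.+1 pa fg).
by apply: eq_bigr => p _; congr (_ * _); apply: eq_bigr => ab _; rewrite IH.
Qed.

Lemma run1D k P pa f g :
  run1 k P pa (fun A => f A + g A) = run1 k P pa f + run1 k P pa g.
Proof.
elim: k P pa => [|k IH] P pa //=; case: ifP => _; last exact: (run2D k.+1).
rewrite -big_split; apply: eq_bigr => p _ /=; rewrite -mulrDr -big_split /=.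
by congr (_ * _); apply: eq_bigr => ab _; rewrite IH mulrDr.
Qed.

Lemma mean_ordered_pairs (p : {set N}) (K : R) : #|p| = 2 ->
  \sum_(ab : N * N | (ab.1 != ab.2) && (p == [set ab.1; ab.2])) 2^-1 * K = K.
Proof.
move=> /eqP /cards2P [i [j [ij ->]]].
rewrite (eq_bigl [in [set (i, j); (j, i)]]); last first.
  move=> [a b] /=; rewrite !inE; apply/andP/orP.
  - by move=> [ab /eqP/esym/(eq_set2 ab)] [[-> ->]|[-> ->]]; [left | right].
  - by move=> [] /eqP [-> ->]; rewrite ?[[set j; i]]setUC eqxx // eq_sym.
rewrite sumr_const cards2.
have -> : (i, j) != (j, i) by apply: contraNneq ij => -[->].
by rewrite /= mulr2n; lra.
Qed.

Lemma run1_const k (P : {set {set N}}) pa (K : R) :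
  {in P, forall p : {set N}, #|p| = 2} -> run1 k P pa (fun=> K) = K.
Proof.
elim: k P pa => [|k IH] P pa P2 //=; case: ifP => [/andP [P0 _]|_].
  rewrite -[RHS](mean_const K P0); apply: eq_bigr => p Pp; congr (_ * _).
  rewrite -[RHS](mean_ordered_pairs K (P2 p Pp)); apply: eq_bigr => ab _.
  by rewrite IH // => q /setD1P [_ /P2].
exact: (run2_const k.+1).
Qed.

End Expectation.

Section Potential.
Variables (R : realFieldType) (N V : finType) (E : rel V) (u : N -> V -> bool).
Variables (F : rel N) (phi : R) (Astar : {ffun N -> V}).
Hypothesis Astar_inj : injective Astar.
Hypothesis F_sym : symmetric F.
Hypothesis F_irr : irreflexive F.
Hypothesis F_deg1 : forall i j k, F i j -> F i k -> j = k.
Implicit Types (pa : palloc N V) (P : {set {set N}}).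

Definition opt_valued pa :=
  #|[set i | [&& pa i == None, u i (Astar i) & free pa (Astar i)]]|.

Definition opt_adjacent pa :=
  #|[set ij : N * N | [&& F ij.1 ij.2, E (Astar ij.1) (Astar ij.2),
                          free pa (Astar ij.1) & free pa (Astar ij.2)]]|.

Definition open_pairs P := #|[set ij : N * N | F ij.1 ij.2 && ([set ij.1; ij.2] \in P)]|.

Definition potential P pa : R :=
  (opt_valued pa)%:R / 4 + phi / 4 * (minn (opt_adjacent pa) (open_pairs P))%:R.

Lemma card_Astar_preim z : (#|[set i | Astar i == z]| <= 1)%N.
Proof.
apply/card_le1_eqP => i j; rewrite !inE => /eqP Ai /eqP Aj.
by apply: Astar_inj; rewrite Ai Aj.
Qed.

Lemma card_friend_Astar1 z :
  (#|[set ij : N * N | F ij.1 ij.2 && (Astar ij.1 == z)]| <= 1)%N.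
Proof.
apply/card_le1_eqP => -[i j] [i' j']; rewrite !inE /=.
move=> /andP [ij /eqP Ai] /andP [ij' /eqP Ai'].
have ii' : i = i' by apply: Astar_inj; rewrite Ai Ai'.
by rewrite -ii' in ij' *; rewrite (F_deg1 ij ij').
Qed.

Lemma card_friend_Astar2 z :
  (#|[set ij : N * N | F ij.1 ij.2 && (Astar ij.2 == z)]| <= 1)%N.
Proof.
apply/card_le1_eqP => -[i j] [i' j']; rewrite !inE /=.
move=> /andP [ij /eqP Aj] /andP [ij' /eqP Aj'].
have jj' : j = j' by apply: Astar_inj; rewrite Aj Aj'.
rewrite F_sym -jj' in ij'; rewrite F_sym in ij.
by rewrite -jj' (F_deg1 ij ij').
Qed.

Lemma opt_valued_le_unplaced pa : (opt_valued pa <= #|unplaced pa|)%N.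
Proof. by apply/subset_leq_card/subsetP => i; rewrite !inE => /and3P []. Qed.

Lemma opt_valued_placed pa j v : (opt_valued pa <= opt_valued (placed pa j v) + 2)%N.
Proof.
have cover : [set i | [&& pa i == None, u i (Astar i) & free pa (Astar i)]] \subset
    [set i | [&& placed pa j v i == None, u i (Astar i) & free (placed pa j v) (Astar i)]]
    :|: [set j] :|: [set i | Astar i == v].
  apply/subsetP => i; rewrite !inE ffunE => /and3P [pai ui fi].
  case: (i =P j) => [_|_]; first by rewrite orbT.
  have [->|Av] := eqVneq (Astar i) v; first by rewrite orbT.
  by rewrite pai ui free_placed.
rewrite /opt_valued; have := card_le_cover3 cover.
by rewrite cards1; have := card_Astar_preim v; lia.
Qed.

Lemma opt_adjacent_placed pa j v : (opt_adjacent pa <= opt_adjacent (placed pa j v) + 2)%N.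
Proof.
have cover : [set ij : N * N | [&& F ij.1 ij.2, E (Astar ij.1) (Astar ij.2),
                                 free pa (Astar ij.1) & free pa (Astar ij.2)]] \subset
    [set ij : N * N | [&& F ij.1 ij.2, E (Astar ij.1) (Astar ij.2),
              free (placed pa j v) (Astar ij.1) & free (placed pa j v) (Astar ij.2)]]
    :|: [set ij : N * N | F ij.1 ij.2 && (Astar ij.1 == v)]
    :|: [set ij : N * N | F ij.1 ij.2 && (Astar ij.2 == v)].
  apply/subsetP => -[i j']; rewrite !inE /= => /and4P [ij Eij fi fj].
  have [->|Ai] := eqVneq (Astar i) v; first by rewrite ij orbT.
  have [->|Aj] := eqVneq (Astar j') v; first by rewrite ij orbT.
  by rewrite ij Eij !free_placed.
rewrite /opt_adjacent; have := card_le_cover3 cover.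
have := card_friend_Astar1 v; have := card_friend_Astar2 v.
lia.
Qed.

Lemma open_pairs_setD1 P a b : (open_pairs P <= open_pairs (P :\ [set a; b]) + 2)%N.
Proof.
have cover : [set ij : N * N | F ij.1 ij.2 && ([set ij.1; ij.2] \in P)] \subset
    [set ij : N * N | F ij.1 ij.2 && ([set ij.1; ij.2] \in P :\ [set a; b])]
    :|: [set (a, b); (b, a)].
  apply/subsetP => -[i j]; rewrite !inE /= => /andP [ij ->]; rewrite ij andbT.
  have [/(eq_set2 (irr_rel_neq F_irr ij)) [[-> ->]|[-> ->]]|//] :=
    eqVneq [set i; j] [set a; b]; by rewrite eqxx ?orbT.
rewrite /open_pairs; have := card_le_cover cover.
by rewrite cards2; case: (_ != _); lia.
Qed.

Lemma potential_pair_drop P pa a b x y : 1 <= phi ->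
  potential P pa <=
  potential (P :\ [set a; b]) (placed (placed pa a x) b y) + phi *+ 2.
Proof.
move=> phi_ge1; pose pa2 := placed (placed pa a x) b y.
have valued : (opt_valued pa <= opt_valued pa2 + 4)%N.
  rewrite /pa2; have := opt_valued_placed pa a x.
  by have := opt_valued_placed (placed pa a x) b y; lia.
have adjacent : (minn (opt_adjacent pa) (open_pairs P)
                 <= minn (opt_adjacent pa2) (open_pairs (P :\ [set a; b])) + 4)%N.
  rewrite /pa2; have := opt_adjacent_placed pa a x.
  have := opt_adjacent_placed (placed pa a x) b y.
  by have := open_pairs_setD1 P a b; lia.
move: valued adjacent; rewrite -!(ler_nat R) !natrD => valued adjacent.
have phi4 : 0 <= phi / 4 by lra.
have := ler_wpM2l phi4 adjacent; rewrite /potential mulrDr mulr2n; lra.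
Qed.

Lemma phase_over_minn0 P pa : ~~ ((P != set0) && adjfree E pa) ->
  minn (opt_adjacent pa) (open_pairs P) = 0%N.
Proof.
rewrite negb_and negbK => /orP [/eqP-> | stuck].
  suff -> : open_pairs set0 = 0%N by rewrite minn0.
  by apply/eqP; rewrite cards_eq0; apply/eqP/setP => ij; rewrite !inE andbF.
suff -> : opt_adjacent pa = 0%N by rewrite min0n.
apply/eqP; rewrite cards_eq0; apply/eqP/setP => -[i j]; rewrite !inE /=.
apply/negbTE; apply: contra stuck => /and4P [ij Eij fi fj].
apply/existsP; exists (Astar i); apply/existsP; exists (Astar j).
by rewrite Eij fi fj (inj_eq Astar_inj) (irr_rel_neq F_irr ij).
Qed.

Lemma SW_opt_counts : SW E u F phi Astar =
  (opt_valued (empty_alloc N V))%:R + phi * (opt_adjacent (empty_alloc N V))%:R.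
Proof.
rewrite /SW /util big_split /= /opt_valued /opt_adjacent !natr_card_set.
congr (_ + _); first by apply: eq_bigr => i _; rewrite ffunE free_empty andbT.
rewrite -(pair_big xpredT xpredT (fun i j => ([&& F i j, E (Astar i) (Astar j),
   free (empty_alloc N V) (Astar i) & free (empty_alloc N V) (Astar j)])%:R)) /=.
rewrite mulr_sumr; apply: eq_bigr => i _; rewrite big_mkcond mulr_sumr /=.
by apply: eq_bigr => j _; rewrite !free_empty !andbT; case: (F i j); rewrite ?mulr0.
Qed.

Lemma opt_adjacent_le_open_init :
  (opt_adjacent (empty_alloc N V) <= open_pairs (P0 F))%N.
Proof.
have report_friend i j : F i j -> report F i = Some j.
  by rewrite /report => ij; case: pickP => [j' /(F_deg1 ij)->|/(_ j)]; rewrite ?ij.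
apply/subset_leq_card/subsetP => -[i j]; rewrite !inE /= => /and4P [ij _ _ _].
rewrite ij; apply/existsP; exists i; apply/existsP; exists j.
have ji : F j i by rewrite F_sym.
by rewrite (report_friend _ _ ij) (report_friend _ _ ji) !eqxx.
Qed.

End Potential.

Section Rationality.
Variables (R : realFieldType) (N V : finType) (E : rel V) (u : N -> V -> bool).
Variables (F : rel N) (phi : R) (c : palloc N V -> {ffun N -> V}) (st : strat N V).
Hypothesis completion : completion_ok c.
Hypothesis rat : rational E u F phi c st.
Local Notation run1 := (@run1 R N V E u c st).
Local Notation run2 := (@run2 R N V u c st).
Local Notation util := (util E u F phi).
Implicit Types (pa : palloc N V) (A : {ffun N -> V}) (P : {set {set N}}).

Lemma s1_optimal k P pa a b : (exists v, free pa v) ->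
  free pa (s1 st k P pa a b) /\
  forall w, free pa w ->
    run1 k P (placed (placed pa a w) b (s2 st k P (placed pa a w) b)) (util^~ a)
    <= run1 k P (placed (placed pa a (s1 st k P pa a b)) b
                   (s2 st k P (placed pa a (s1 st k P pa a b)) b)) (util^~ a).
Proof. by case: rat => + _; apply. Qed.

Lemma s2_optimal k P pa b : (exists v, free pa v) ->
  free pa (s2 st k P pa b) /\
  forall w, free pa w ->
    run1 k P (placed pa b w) (util^~ b)
    <= run1 k P (placed pa b (s2 st k P pa b)) (util^~ b).
Proof. by case: rat => _ [+ _]; apply. Qed.

Lemma s3_optimal k pa i : (exists v, free pa v) ->
  free pa (s3 st k pa i) /\
  forall w, free pa w ->
    run2 k (placed pa i w) (util^~ i) <= run2 k (placed pa i (s3 st k pa i)) (util^~ i).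
Proof. by case: rat => _ [_ +]; apply. Qed.

Lemma extends_completion pa : pinj pa -> extends pa (c pa).
Proof. by move=> /completion [_]. Qed.

Lemma ler_run2 k pa f g : pinj pa -> (forall A, extends pa A -> f A <= g A) ->
  run2 k pa f <= run2 k pa g.
Proof.
elim: k pa => [|k IH] pa inj fg /=; first exact/fg/extends_completion.
case: ifP => _; first exact/fg/extends_completion.
apply: ler_sum => i; rewrite inE => /andP [/eqP pai /existsP [v /andP [fv _]]].
apply: ler_wpM2l; first by rewrite invr_ge0 ler0n.
have [fs _] := s3_optimal k i (ex_intro _ v fv).
apply: IH; first exact: pinj_placed.
by move=> A /(extends_placed pai); apply: fg.
Qed.

Lemma run2_ge k pa f K : pinj pa -> (forall A, extends pa A -> K <= f A) ->
  K <= run2 k pa f.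
Proof. by move=> inj fK; rewrite -[leLHS](run2_const u c st k pa K); apply: ler_run2. Qed.

Hypothesis F_sym : symmetric F.
Hypothesis F_irr : irreflexive F.
Hypothesis F_deg1 : forall i j k, F i j -> F i k -> j = k.

Lemma friend_uniq a b : F a b -> F a =1 pred1 b.
Proof. by move=> ab t; apply/idP/eqP => [/(F_deg1 ab)|->]. Qed.

Lemma friend_set2 i j x : F i j -> x \in [set i; j] ->
  exists y, F x y /\ [set i; j] = [set x; y].
Proof.
move=> ij /set2P [->|->]; first by exists j.
by exists i; rewrite F_sym setUC.
Qed.

Lemma friend_pair_eq i j i' j' x : F i j -> F i' j' ->
  x \in [set i; j] -> x \in [set i'; j'] -> [set i; j] = [set i'; j'].
Proof.
move=> ij ij' /(friend_set2 ij) [y [xy ->]] /(friend_set2 ij') [y' [xy' ->]].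
by rewrite (F_deg1 xy xy').
Qed.

Definition phase_inv P pa := [/\ pinj pa,
  {in P, forall p : {set N}, exists i j, F i j /\ p = [set i; j]} &
  {in P, forall p : {set N}, {in p, forall x, pa x = None}}].

Lemma phase_inv_card2 P pa : phase_inv P pa -> {in P, forall p : {set N}, #|p| = 2}.
Proof.
case=> _ pairs _ p /pairs [i [j [ij ->]]].
by rewrite cards2 (irr_rel_neq F_irr ij).
Qed.

Lemma phase_inv_friends P pa p a b : phase_inv P pa -> p \in P -> a != b ->
  p = [set a; b] -> F a b.
Proof.
case=> _ pairs _ /pairs [i [j [ij ->]]] ab /esym /(eq_set2 ab).
by case=> -[-> ->]; rewrite // F_sym.
Qed.

Lemma phase_inv_pair_unplaced P pa p a b x : phase_inv P pa -> p \in P -> a != b ->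
  p = [set a; b] -> pa a = None /\ placed pa a x b = None.
Proof.
case=> _ _ unpl Pp ab pab.
by rewrite ffunE eq_sym (negbTE ab); split; apply: (unpl p Pp); rewrite pab ?set21 ?set22.
Qed.

Lemma phase_inv_step P pa p a b x y : phase_inv P pa -> p \in P -> a != b ->
  p = [set a; b] -> free pa x -> free (placed pa a x) y ->
  phase_inv (P :\ p) (placed (placed pa a x) b y) /\
  (forall A, extends (placed (placed pa a x) b y) A -> extends pa A).
Proof.
move=> inv Pp ab pab fx fy.
have [pa_a pa_b] := phase_inv_pair_unplaced x inv Pp ab pab.
case: inv => inj pairs unpl.
split=> [|A /(extends_placed pa_b) /(extends_placed pa_a) //].
split=> [||q /setD1P [qp Pq] z qz]; first exact/pinj_placed/fy/pinj_placed.
  by move=> q /setD1P [_ /pairs].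
have [[i [j [ij qij]]] [i' [j' [ij' pij]]]] := (pairs q Pq, pairs p Pp).
have zp : z \notin p.
  apply: contra qp => zp; rewrite qij pij; apply/eqP.
  by apply: (friend_pair_eq (x := z)); rewrite // -?qij -?pij.
rewrite !ffunE; move: zp; rewrite pab !inE negb_or => /andP [/negbTE-> /negbTE->].
exact: (unpl q Pq z qz).
Qed.

Lemma phase_inv_init : phase_inv (P0 F) (empty_alloc N V).
Proof.
split=> [x y v|p|p _ x _]; rewrite ?ffunE //.
rewrite inE => /existsP [i /existsP [j /and3P [/eqP ri _ /eqP ->]]].
by exists i, j; split=> //; move: ri; rewrite /report; case: pickP => // j' ij' [<-].
Qed.

Lemma ler_run1 k P pa f g : phase_inv P pa ->
  (forall A, extends pa A -> f A <= g A) -> run1 k P pa f <= run1 k P pa g.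
Proof.
elim: k P pa => [|k IH] P pa inv fg; case: (inv) => inj _ _.
  exact/fg/extends_completion.
rewrite /=; case: ifP => [/andP [_ adj]|_]; last exact: (ler_run2 k.+1).
apply: ler_sum => p Pp; apply: ler_wpM2l; first by rewrite invr_ge0 ler0n.
apply: ler_sum => -[a b] /= /andP [ab /eqP pab].
apply: ler_wpM2l; first by rewrite invr_ge0 ler0n.
have [fx _] := s1_optimal k (P :\ p) a b (adjfree_ex_free adj).
have [fy _] := s2_optimal k (P :\ p) b
  (adjfree_ex_free_placed a (s1 st k (P :\ p) pa a b) adj).
have [inv' ext'] := phase_inv_step inv Pp ab pab fx fy.
by apply: IH inv' _ => A /ext'; apply: fg.
Qed.

Lemma run1_ge k P pa f K : phase_inv P pa ->
  (forall A, extends pa A -> K <= f A) -> K <= run1 k P pa f.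
Proof.
move=> inv fK; rewrite -[leLHS](run1_const E u c st k pa K (phase_inv_card2 inv)).
exact: ler_run1.
Qed.

Lemma run1_eq_const k P pa f K : phase_inv P pa ->
  (forall A, extends pa A -> f A = K) -> run1 k P pa f = K.
Proof.
move=> inv fK; rewrite -(run1_const E u c st k pa K (phase_inv_card2 inv)).
by apply/le_anti/andP; split; apply: ler_run1 => // A /fK->.
Qed.

Hypothesis E_sym : symmetric E.
Hypothesis phi_gt1 : 1 < phi.

Lemma val_le_util A i : (u i (A i))%:R <= util A i.
Proof.
rewrite /util lerDl; apply: sumr_ge0 => j _.
by apply: mulr_ge0 => //; apply: le_trans ler01 (ltW phi_gt1).
Qed.

Lemma util_friend A a b : F a b ->
  util A a = (u a (A a))%:R + phi * (E (A a) (A b))%:R.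
Proof. by move=> /friend_uniq Fa; rewrite /util (eq_bigl _ _ Fa) big_pred1_eq. Qed.

Lemma run1_pair_util k P pa p a b z w : phase_inv P pa -> p \in P -> a != b ->
  p = [set a; b] -> free pa z -> free (placed pa a z) w ->
  run1 k (P :\ p) (placed (placed pa a z) b w) (util^~ a)
    = (u a z)%:R + phi * (E z w)%:R /\
  run1 k (P :\ p) (placed (placed pa a z) b w) (util^~ b)
    = (u b w)%:R + phi * (E w z)%:R.
Proof.
move=> inv Pp ab pab fz fw.
have Fab := phase_inv_friends inv Pp ab pab.
have [inv' _] := phase_inv_step inv Pp ab pab fz fw.
have placed_ab A : extends (placed (placed pa a z) b w) A -> A a = z /\ A b = w.
  move=> ext; split; last exact: extends_placed_at ext.
  by apply: ext; rewrite !ffunE (negbTE ab) eqxx.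
split; apply: run1_eq_const inv' _ => A /placed_ab [Aa Ab].
  by rewrite (util_friend _ Fab) Aa Ab.
have Fba : F b a by rewrite F_sym.
by rewrite (util_friend _ Fba) Aa Ab.
Qed.

Lemma s2_adjacent k P pa p a b z w : phase_inv P pa -> p \in P -> a != b ->
  p = [set a; b] -> adjfree E pa -> free pa z -> free (placed pa a z) w -> E w z ->
  E (s2 st k (P :\ p) (placed pa a z) b) z.
Proof.
move=> inv Pp ab pab adj fz fw wz.
have [fy best] := s2_optimal k (P :\ p) b (adjfree_ex_free_placed a z adj).
have := best w fw.
rewrite (run1_pair_util k inv Pp ab pab fz fw).2.
rewrite (run1_pair_util k inv Pp ab pab fz fy).2 wz.
apply: contraTT => /negbTE->; rewrite mulr0 addr0 mulr1 -ltNge.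
have : (u b (s2 st k (P :\ p) (placed pa a z) b))%:R <= 1 :> R by rewrite lern1 leq_b1.
have : 0 <= (u b w)%:R :> R by [].
have := phi_gt1; lra.
Qed.

Lemma pair_util_ge_phi k P pa p a b : phase_inv P pa -> p \in P -> a != b ->
  p = [set a; b] -> adjfree E pa ->
  let x := s1 st k (P :\ p) pa a b in
  let y := s2 st k (P :\ p) (placed pa a x) b in
  phi <= run1 k (P :\ p) (placed (placed pa a x) b y) (util^~ a) /\
  phi <= run1 k (P :\ p) (placed (placed pa a x) b y) (util^~ b).
Proof.
move=> inv Pp ab pab adj x y.
have [fx best] := s1_optimal k (P :\ p) a b (adjfree_ex_free adj).
have [fy _] := s2_optimal k (P :\ p) b (adjfree_ex_free_placed a x adj).
have [v [w [vw Evw fv fw]]] := adjfreeP adj.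
have fw' : free (placed pa a v) w by apply: free_placed; rewrite // eq_sym.
have [fy' _] := s2_optimal k (P :\ p) b (adjfree_ex_free_placed a v adj).
have Ewv : E w v by rewrite E_sym.
(* picking v secures phi for a, because b then answers with a plot adjacent to v *)
have a_ge_phi : phi <= run1 k (P :\ p) (placed (placed pa a x) b y) (util^~ a).
  apply: le_trans (best v fv).
  rewrite (run1_pair_util k inv Pp ab pab fv fy').1.
  by rewrite E_sym (s2_adjacent k inv Pp ab pab adj fv fw' Ewv) mulr1 lerDr.
have Exy : E x y.
  move: a_ge_phi; rewrite (run1_pair_util k inv Pp ab pab fx fy).1.
  apply: contraTT => /negbTE->; rewrite mulr0 addr0 -ltNge.
  have : (u a x)%:R <= 1 :> R by rewrite lern1 leq_b1.
  have := phi_gt1; lra.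
split=> //.
by rewrite (run1_pair_util k inv Pp ab pab fx fy).2 E_sym Exy mulr1 lerDr.
Qed.

Definition residual_SW pa A := \sum_(i in unplaced pa) util A i.

Lemma residual_SW_ge0 pa A : 0 <= residual_SW pa A.
Proof. by apply: sumr_ge0 => i _; apply: le_trans (val_le_util A i). Qed.

Lemma residual_SW_placed pa i v : pa i = None ->
  forall A, residual_SW pa A = util A i + residual_SW (placed pa i v) A.
Proof.
move=> pai A; rewrite /residual_SW (bigD1 i) ?inE ?pai //=; congr (_ + _).
by apply: eq_bigl => j; rewrite !inE ffunE; case: (j =P i) => [->|]; rewrite ?andbF ?andbT.
Qed.

Lemma residual_SW_empty A : residual_SW (empty_alloc N V) A = SW E u F phi A.
Proof. by apply: eq_bigl => i; rewrite !inE ffunE. Qed.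

Section OptimalAllocation.
Variable Astar : {ffun N -> V}.
Hypothesis Astar_inj : injective Astar.
Local Notation opt_valued := (opt_valued u Astar).
Local Notation potential := (potential E u F phi Astar).

Lemma rsd_bound k pa : pinj pa -> (#|unplaced pa| <= k)%N ->
  (opt_valued pa)%:R / 4 <= run2 k pa (residual_SW pa).
Proof.
elim: k pa => [|k IH] pa inj k_ge /=.
  have -> : opt_valued pa = 0%N by have := opt_valued_le_unplaced u Astar pa; lia.
  by rewrite mul0r residual_SW_ge0.
case: ifP => [/eqP rsd0|/negbT rsd0].
  suff -> : opt_valued pa = 0%N by rewrite mul0r residual_SW_ge0.
  apply/eqP; rewrite cards_eq0; apply/eqP/setP => i; rewrite !inE.
  apply/negbTE/and3P => -[pai ui fi].
  suff : i \in rsd_set u pa by rewrite rsd0 inE.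
  by rewrite inE pai; apply/existsP; exists (Astar i); rewrite fi ui.
rewrite -[leLHS](mean_const _ rsd0); apply: ler_sum => i Si.
apply: ler_wpM2l; first by rewrite invr_ge0 ler0n.
move: Si; rewrite inE => /andP [/eqP pai /existsP [v /andP [fv uv]]].
have [fw best] := s3_optimal k i (ex_intro _ v fv).
set w := s3 st k pa i in fw best *.
rewrite (eq_run2 u c st k _ (residual_SW_placed w pai)) run2D.
have util_i : 1 <= run2 k (placed pa i w) (util^~ i).
  apply: le_trans (best v fv); apply: run2_ge; first exact: pinj_placed.
  by move=> A /extends_placed_at Ai; apply: le_trans (val_le_util A i); rewrite Ai uv.
have rest := IH _ (pinj_placed (i := i) inj fw)
  (leq_trans (card_unplaced_placed w pai) k_ge).
have := opt_valued_placed u Astar_inj pa i w; rewrite -(ler_nat R) natrD.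
lra.
Qed.

Lemma potential_all_placed P pa : phase_inv P pa -> unplaced pa = set0 ->
  potential P pa = 0.
Proof.
move=> [_ _ unpl] all_placed; rewrite /potential.
have -> : open_pairs F P = 0%N.
  apply/eqP; rewrite cards_eq0; apply/eqP/setP => -[i j]; rewrite !inE /=.
  apply/negbTE/andP => -[_ /unpl /(_ i (set21 i j)) pai].
  by move/setP/(_ i): all_placed; rewrite !inE pai eqxx.
have -> : opt_valued pa = 0%N.
  by apply/eqP; rewrite -leqn0 -(cards0 N) -all_placed opt_valued_le_unplaced.
by rewrite minn0 mul0r mulr0 addr0.
Qed.

Lemma friend_phase_bound k P pa : phase_inv P pa -> (#|unplaced pa| <= k)%N ->
  potential P pa <= run1 k P pa (residual_SW pa).
Proof.
elim: k P pa => [|k IH] P pa inv k_ge.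
  rewrite (potential_all_placed inv) ?residual_SW_ge0 //.
  by apply/eqP; rewrite -cards_eq0 -leqn0.
rewrite /=; case: ifP => [/andP [P0 adj]|/negbT over]; last first.
  rewrite /potential (phase_over_minn0 Astar_inj F_irr over) mulr0 addr0.
  by case: inv => inj _ _; exact: (rsd_bound inj k_ge).
rewrite -[leLHS](mean_const _ P0); apply: ler_sum => p Pp.
apply: ler_wpM2l; first by rewrite invr_ge0 ler0n.
rewrite -[leLHS](mean_ordered_pairs _ (phase_inv_card2 inv Pp)).
apply: ler_sum => -[a b] /= /andP [ab /eqP pab].
apply: ler_wpM2l; first by rewrite invr_ge0 ler0n.
have [util_a util_b] := pair_util_ge_phi k inv Pp ab pab adj.
set x := s1 st k (P :\ p) pa a b in util_a util_b *.
set y := s2 st k (P :\ p) (placed pa a x) b in util_a util_b *.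
have [fx _] := s1_optimal k (P :\ p) a b (adjfree_ex_free adj).
have [fy _] := s2_optimal k (P :\ p) b (adjfree_ex_free_placed a x adj).
have [inv' _] := phase_inv_step inv Pp ab pab fx fy.
have [pa_a pa_b] := phase_inv_pair_unplaced x inv Pp ab pab.
rewrite (eq_run1 E u c st k _ _ (residual_SW_placed x pa_a)) run1D.
rewrite (eq_run1 E u c st k _ _ (residual_SW_placed y pa_b)) run1D.
have rest : potential (P :\ p) (placed (placed pa a x) b y)
            <= run1 k (P :\ p) (placed (placed pa a x) b y)
                 (residual_SW (placed (placed pa a x) b y)).
  apply: IH inv' _.
  have := card_unplaced_placed x pa_a; have := card_unplaced_placed y pa_b.
  by rewrite /y /x; lia.
have := potential_pair_drop E u Astar_inj F_sym F_irr F_deg1 P pa a b x y (ltW phi_gt1).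
rewrite -pab; lra.
Qed.

Lemma SW_quarter_le_expected : SW E u F phi Astar / 4 <= expected_SW E u F phi c st.
Proof.
have := friend_phase_bound phase_inv_init (max_card (mem (unplaced (empty_alloc N V)))).
rewrite (eq_run1 E u c st _ _ _ residual_SW_empty); apply: le_trans.
rewrite /potential SW_opt_counts (minn_idPl (opt_adjacent_le_open_init E Astar F_sym F_deg1)).
lra.
Qed.

End OptimalAllocation.

Lemma expected_SW_ge0 : 0 <= expected_SW E u F phi c st.
Proof.
apply: run1_ge phase_inv_init _ => A _.
by apply: sumr_ge0 => i _; apply: le_trans (val_le_util A i).
Qed.

End Rationality.

Theorem theorem5p2 (R : realFieldType) (N V : finType) (E : rel V)
    (u : N -> V -> bool) (F : rel N) (phi : R)
    (c : palloc N V -> {ffun N -> V}) (st : strat N V) :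
  #|N| = #|V| ->
  symmetric E ->
  symmetric F -> irreflexive F ->
  (forall i j k, F i j -> F i k -> j = k) ->   (* max degree <= 1 *)
  (exists i j, F i j) ->                        (* max degree exactly 1 *)
  1 < phi ->
  completion_ok c ->
  rational E u F phi c st ->
  OPT E u F phi / 4 <= expected_SW E u F phi c st.
Proof.
move=> _ E_sym F_sym F_irr F_deg1 _ phi_gt1 completion rat.
have expected_ge0 := expected_SW_ge0 completion rat F_sym F_irr F_deg1 phi_gt1.
rewrite ler_pdivrMr //; apply/bigmax_leP; split=> [|A /injectiveP A_inj].
  by rewrite mulr_ge0.
rewrite -ler_pdivrMr //.
exact: SW_quarter_le_expected completion rat F_sym F_irr F_deg1 E_sym phi_gt1 A A_inj.
Qed.
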